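(* Let $\mathcal H$ be the $5$-uniform hypergraph defined below, let $e,f$ be two edges of $\mathcal H$, and let $\phi : V(\mathcal{H}_{ef}) \to V(\mathcal{H})$ be a monomorphism. If $b, e_5 \in \mathcal{H}_{ef}$, then $\phi$ is the identity.
   Context: $\mathcal{H}$ has vertex set $\{z, v_1,\dots,v_9\}$ and edges $r=\{z,v_1,v_3,v_5,v_8\}$, $g=\{z,v_2,v_4,v_7,v_9\}$, $a=\{v_1,v_4,v_6,v_8,v_9\}$, $b=\{v_9,v_1,v_2,v_3,v_4\}$, and $e_i=\{v_i,v_{i+1},v_{i+2},v_{i+3},v_{i+4}\}$ for $i=1,\dots,5$. $\mathcal{H}_{ef}$ is the hypergraph with edge set $E(\mathcal H)\setminus\{e,f\}$, and $V(\mathcal H_{ef})$ is the union of its edges. A monomorphism $\phi: V(\mathcal{H}_{ef})\to V(\mathcal{H})$ is an injective map such that $\{\phi(y): y\in x\}$ is an edge of $\mathcal H$ for every edge $x$ of $\mathcal H_{ef}$; ''identity'' means $\phi(y)=y$ for all $y\in V(\mathcal H_{ef})$. *)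

From mathcomp Require Import all_boot.
Set Implicit Arguments. Unset Strict Implicit. Unset Printing Implicit Defensive.

Definition V (i : nat) : 'I_10 := inord i.
Definition z : 'I_10 := V 0.

Definition edge_r : {set 'I_10} := [set z; V 1; V 3; V 5; V 8].
Definition edge_g : {set 'I_10} := [set z; V 2; V 4; V 7; V 9].
Definition edge_a : {set 'I_10} := [set V 1; V 4; V 6; V 8; V 9].
Definition edge_b : {set 'I_10} := [set V 9; V 1; V 2; V 3; V 4].
Definition edge_e (i : nat) : {set 'I_10} :=
  [set V i; V i.+1; V i.+2; V i.+3; V i.+4].

Definition H : {set {set 'I_10}} :=
  [set edge_r; edge_g; edge_a; edge_b;
       edge_e 1; edge_e 2; edge_e 3; edge_e 4; edge_e 5].

Definition H_ef (e f : {set 'I_10}) : {set {set 'I_10}} := H :\: [set e; f].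
Definition V_ef (e f : {set 'I_10}) : {set 'I_10} := \bigcup_(x in H_ef e f) x.

(* phi : V(H_ef) -> V(H) is a monomorphism (phi is given as a total map on
   'I_10; only its values on V(H_ef) matter). *)
Definition monomorphism (e f : {set 'I_10}) (phi : 'I_10 -> 'I_10) : Prop :=
  {in V_ef e f &, injective phi} /\
  (forall x, x \in H_ef e f -> phi @: x \in H).

From mathcomp Require Import all_boot.
Set Implicit Arguments. Unset Strict Implicit. Unset Printing Implicit Defensive.

(* Since phi is injective on V(H_ef), it maps every edge x of H_ef bijectively
   onto an edge y of H, and then a vertex v of H_ef lies in x iff phi v lies
   in y.  A backtracking search over partial maps on V(H_ef), pruned by this
   criterion and by injectivity, enumerates all candidate monomorphisms; running
   it for every admissible pair {e, f} leaves only the identity. *)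

Section MonomorphismSearch.

Variable T : eqType.
Variables (Ks Es : seq (seq T)) (targets : seq T).

Definition refine_edge_images (v a : T) (st : seq (seq T * seq (seq T))) :=
  [seq (q.1, [seq y <- q.2 | (v \in q.1) == (a \in y)]) | q <- st].

(* Pruning: a vertex outside x cannot be mapped into the image y of x. *)
Definition edge_images (s : seq (T * T)) : seq (seq T * seq (seq T)) :=
  [seq (x, [seq y <- Es | all (fun p => (p.1 \in x) == (p.2 \in y)) s]) | x <- Ks].

Lemma edge_images_cons v a s :
  edge_images ((v, a) :: s) = refine_edge_images v a (edge_images s).
Proof.
rewrite /refine_edge_images -map_comp; apply: eq_map => x /=.
by rewrite -filter_predI.
Qed.

(* Each node caches [edge_images] of its partial map (see [edge_images_cons]),
   so that extending the map only filters the cached candidates. *)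
Fixpoint search (vs : seq T) : seq (seq (T * T) * seq (seq T * seq (seq T))) :=
  if vs is v :: vs' then
    [seq n <- [seq ((v, a) :: n.1, refine_edge_images v a n.2)
                 | n <- search vs', a <- targets]
       | uniq (unzip2 n.1) && all (fun q => q.2 != [::]) n.2]
  else [:: ([::], edge_images [::])].

Definition vertices : seq T := undup (flatten Ks).

Definition search_fixes : bool :=
  all (fun n => all (fun p => p.1 == p.2) n.1) (search vertices).

Variable phi : T -> T.
Hypothesis phi_inj : {in vertices &, injective phi}.
Hypothesis phi_targets : {in vertices, forall v, phi v \in targets}.
Hypothesis phi_edges : forall x, x \in Ks -> exists2 y, y \in Es & map phi x =i y.

Definition graph (vs : seq T) : seq (T * T) := [seq (v, phi v) | v <- vs].

Lemma mem_image_edge (x y : seq T) (v : T) :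
  x \in Ks -> map phi x =i y -> v \in vertices -> (v \in x) = (phi v \in y).
Proof.
move=> Ksx phixy Vv; rewrite -phixy; apply/idP/mapP => [xv | [u xu /phi_inj]].
  by exists v.
have Vu : u \in vertices by rewrite mem_undup; apply/flattenP; exists x.
by move=> /(_ Vv Vu) ->.
Qed.

Lemma unzip2_graph vs : unzip2 (graph vs) = map phi vs.
Proof. by rewrite /unzip2 -map_comp. Qed.

Lemma graph_in_search vs :
  uniq vs -> {subset vs <= vertices} -> (graph vs, edge_images (graph vs)) \in search vs.
Proof.
elim: vs => [|v vs IHvs] Uvs sub; first by rewrite mem_seq1.
rewrite [search _]/= mem_filter -andbA; apply/and3P; split.
- rewrite unzip2_graph (map_inj_in_uniq (f := phi)) //.
  by move=> u w /sub Vu /sub Vw; apply: phi_inj.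
- apply/allP => _ /mapP [x Ksx ->].
  have [y Esy phixy] := phi_edges Ksx; rewrite -has_filter.
  apply/hasP; exists y => //; apply/allP => _ /mapP [u vsu ->] /=.
  by rewrite (mem_image_edge Ksx phixy) // sub.
- rewrite edge_images_cons; apply/allpairsP.
  exists ((graph vs, edge_images (graph vs)), phi v); split => //.
  + by apply: IHvs => [|u vsu]; [case/andP: Uvs | apply: sub; rewrite inE vsu orbT].
  + by apply: phi_targets; apply: sub; rewrite inE eqxx.
Qed.

Lemma search_fixesP : search_fixes -> {in vertices, forall v, phi v = v}.
Proof.
move=> /allP fixes v Vv; have := fixes _ (graph_in_search (undup_uniq _) (fun u => id)).
by move=> /allP /(_ (v, phi v) (map_f _ Vv)) /eqP.
Qed.

End MonomorphismSearch.

Section SetsOfSeqs.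

Variable T : finType.

Lemma imset_set_seq (rT : finType) (f : T -> rT) (s : seq T) :
  f @: [set:: s] = [set:: map f s].
Proof.
apply/setP => y; rewrite inE.
by apply/imsetP/mapP => [] [x sx ->]; exists x; rewrite ?inE in sx *.
Qed.

Lemma eq_set_seq (s t : seq T) :
  uniq s -> uniq t -> ([set:: s] == [set:: t]) = perm_eq s t.
Proof.
move=> Us Ut; apply/eqP/idP => [/setP st | /perm_mem st].
  by apply: uniq_perm => // x; have := st x; rewrite !inE.
by apply/setP => x; rewrite !inE st.
Qed.

Lemma bigcup_set_seq (Ks : seq (seq T)) :
  \bigcup_(x in [set:: [seq [set:: s] | s <- Ks]]) x = [set:: flatten Ks].
Proof.
apply/setP => y; rewrite inE.
apply/bigcupP/flattenP => [[_ /[!inE] /mapP [x Ksx ->]] | [x Ksx xy]].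
  by rewrite inE; exists x.
by exists [set:: x]; rewrite !inE ?map_f.
Qed.

Definition kept_edge (se sf s : seq T) : bool := ~~ perm_eq s se && ~~ perm_eq s sf.

Lemma kept_edgeE (se sf s : seq T) : uniq se -> uniq sf -> uniq s ->
  ([set:: s] \notin [set [set:: se]; [set:: sf]]) = kept_edge se sf s.
Proof. by move=> *; rewrite !inE !eq_set_seq // negb_or. Qed.

Definition remove_edges (Es : seq (seq T)) (se sf : seq T) : seq (seq T) :=
  [seq s <- Es | kept_edge se sf s].

Lemma setD_set_seq (Es : seq (seq T)) (se sf : seq T) :
  all uniq Es -> se \in Es -> sf \in Es ->
  [set:: [seq [set:: s] | s <- Es]] :\: [set [set:: se]; [set:: sf]]
  = [set:: [seq [set:: s] | s <- remove_edges Es se sf]].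
Proof.
move=> /allP Es_uniq Es_se Es_sf; apply/setP => X; rewrite in_setD ![X \in [set:: _]]inE.
apply/andP/mapP => [[+ /mapP [s Es_s defX]] | [s]].
  by rewrite defX kept_edgeE ?Es_uniq // => kept_s; exists s; rewrite ?mem_filter ?kept_s.
rewrite mem_filter => /andP [kept_s Es_s] ->.
by rewrite kept_edgeE ?Es_uniq ?map_f.
Qed.

End SetsOfSeqs.

(* A copy of [V] that [vm_compute] can evaluate: [inord] is stuck on the
   opaque [idP]. *)
Definition Vc (i : nat) : 'I_10 := Ordinal (ltn_pmod i (isT : 0 < 10)).

Lemma V_Vc i : i < 10 -> V i = Vc i.
Proof. by move=> lt_i10; apply: val_inj; rewrite /= inordK // modn_small. Qed.

Lemma mem_Vc_iota (x : 'I_10) : x \in map Vc (iota 0 10).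
Proof.
apply/mapP; exists (val x); first by rewrite mem_iota ltn_ord.
by apply: val_inj; rewrite /= modn_small.
Qed.

Lemma set5_Vc i1 i2 i3 i4 i5 : all (fun i => i < 10) [:: i1; i2; i3; i4; i5] ->
  [set V i1; V i2; V i3; V i4; V i5] = [set:: map Vc [:: i1; i2; i3; i4; i5]].
Proof.
case/and5P => ? ? ? ? /andP [? _]; apply/setP => x.
by rewrite !inE !V_Vc // -!orbA.
Qed.

Definition edge_seqs : seq (seq 'I_10) := map (map Vc)
  [:: [:: 0; 1; 3; 5; 8]; [:: 0; 2; 4; 7; 9]; [:: 1; 4; 6; 8; 9]; [:: 9; 1; 2; 3; 4];
      [:: 1; 2; 3; 4; 5]; [:: 2; 3; 4; 5; 6]; [:: 3; 4; 5; 6; 7]; [:: 4; 5; 6; 7; 8];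
      [:: 5; 6; 7; 8; 9]].

Lemma H_set_seq : H = [set:: [seq [set:: s] | s <- edge_seqs]].
Proof.
rewrite /H /edge_r /edge_g /edge_a /edge_b /edge_e /z !set5_Vc //.
by apply/setP => X; rewrite !inE -!orbA.
Qed.

Lemma edge_seqs_uniq : all uniq edge_seqs.
Proof. by vm_compute. Qed.

Lemma removals_search_fixes :
  all (fun se => all (fun sf =>
    kept_edge se sf (map Vc [:: 9; 1; 2; 3; 4]) &&
    kept_edge se sf (map Vc [:: 5; 6; 7; 8; 9]) ==>
    search_fixes (remove_edges edge_seqs se sf) edge_seqs (map Vc (iota 0 10)))
    edge_seqs) edge_seqs.
Proof. by vm_compute. Qed.

Lemma H_ef_set_seq se sf : se \in edge_seqs -> sf \in edge_seqs ->
  H_ef [set:: se] [set:: sf]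
  = [set:: [seq [set:: s] | s <- remove_edges edge_seqs se sf]].
Proof. by move=> *; rewrite /H_ef H_set_seq setD_set_seq // edge_seqs_uniq. Qed.

Lemma V_ef_set_seq se sf : se \in edge_seqs -> sf \in edge_seqs ->
  V_ef [set:: se] [set:: sf] = [set:: flatten (remove_edges edge_seqs se sf)].
Proof. by move=> *; rewrite /V_ef H_ef_set_seq // bigcup_set_seq. Qed.

Theorem lemma4p10 (e f : {set 'I_10}) (phi : 'I_10 -> 'I_10) :
  e \in H -> f \in H -> e != f ->
  monomorphism e f phi ->
  edge_b \in H_ef e f -> edge_e 5 \in H_ef e f ->
  forall y, y \in V_ef e f -> phi y = y.
Proof.
rewrite H_set_seq inE => /mapP [se Es_se ->]; rewrite inE => /mapP [sf Es_sf ->] _.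
have HefE := H_ef_set_seq Es_se Es_sf; have VefE := V_ef_set_seq Es_se Es_sf.
case=> phi_inj phi_edges b_kept e5_kept y; rewrite VefE inE -mem_undup.
apply: (search_fixesP (Es := edge_seqs) (targets := map Vc (iota 0 10))).
- by move=> u w; rewrite !mem_undup => Vu Vw; apply: phi_inj; rewrite VefE inE.
- by move=> v _; apply: mem_Vc_iota.
- move=> x Ks_x; have := phi_edges [set:: x]; rewrite HefE inE map_f // => /(_ isT).
  rewrite H_set_seq imset_set_seq inE => /mapP [s Es_s /setP phi_x].
  by exists s => // u; have := phi_x u; rewrite !inE.
have := removals_search_fixes => /allP /(_ _ Es_se) /allP /(_ _ Es_sf) /implyP; apply.
move: b_kept e5_kept; rewrite /edge_b /edge_e !set5_Vc // /H_ef !in_setD.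
have /allP Es_uniq := edge_seqs_uniq.
by rewrite !kept_edgeE ?Es_uniq // => /andP [-> _] /andP [-> _].
Qed.
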